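(* Let $a_1 \ge 1$ be an integer and $f := X^2 - a_1X - 1$. There exist $\bm{x} \in \mathcal{L}(f)$ and an integer $m \ge 1$ such that $\rho(\bm{x}; m) = 4$ and $x_j \not\equiv 0 \pmod m$ for all $j \ge 0$. In particular, $4 \in \mathcal{R}(f)$.
   Context: $\mathcal{L}(f)$ is the set of integer sequences $\bm{x}=(x_n)_{n\ge0}$ with $x_{n+2} = a_1x_{n+1} + x_n$ for all $n\ge0$. For an integer $m\ge1$, $\rho(\bm{x};m) := \#\{x_n \bmod m : n\ge0\}$, and $\mathcal{R}(f) := \{\rho(\bm{x}; m) : \bm{x}\in\mathcal{L}(f),\ m\in\mathbb{Z}^+\}$. *)

From Stdlib Require Import ZArith List.
Import ListNotations.
Open Scope Z_scope.

(* L(f) for f = X^2 - a1 X - 1: integer sequences with x_{n+2} = a1 x_{n+1} + x_n *)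
Definition in_L (a1 : Z) (x : nat -> Z) : Prop :=
  forall n : nat, x (S (S n)) = a1 * x (S n) + x n.

Definition residue_set (x : nat -> Z) (m : Z) (r : Z) : Prop :=
  exists n : nat, x n mod m = r.

(* rho(x; m) = k : the residue set has exactly k elements,
   i.e. it is enumerated by a duplicate-free list of length k. *)
Definition rho_is (x : nat -> Z) (m : Z) (k : nat) : Prop :=
  exists l : list Z, NoDup l /\ length l = k /\
    (forall r, In r l <-> residue_set x m r).

Definition in_R (a1 : Z) (k : nat) : Prop :=
  exists (x : nat -> Z) (m : Z), in_L a1 x /\ 1 <= m /\ rho_is x m k.

(* For a1 <> 2 the solution with
   (x0, x1) = (a1, -2) satisfies x_{n+2} = -x_n modulo m = a1^2 + 4, so it runs
   through the four distinct nonzero residues a1, -2, -a1, 2.  For a1 = 2 that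
   collapses (2 = a1 and -2 = -a1), and instead the solution with (x0, x1) = (1, 1)
   has period 12 modulo 5 and misses exactly the residue 0. *)

From Stdlib Require Import ZArith List Lia.
Import ListNotations.
Open Scope Z_scope.

Definition residues (x : nat -> Z) (m : Z) (P : nat) : list Z :=
  map (fun i => x i mod m) (seq 0 P).

Section PeriodicModulo.

Variables (a m : Z) (x : nat -> Z).
Hypothesis x_in_L : in_L a x.
Hypothesis m_gt0 : 0 < m.

Lemma in_L_mod_step (i j : nat) :
  x i mod m = x j mod m -> x (S i) mod m = x (S j) mod m ->
  x (S (S i)) mod m = x (S (S j)) mod m.
Proof.
  intros Hi HSi.
  rewrite !x_in_L, Z.add_mod, (Z.add_mod (a * x (S j))) by lia.
  rewrite Z.mul_mod, (Z.mul_mod a (x (S j))) by lia.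
  now rewrite Hi, HSi.
Qed.

Variable P : nat.
Hypothesis P_gt0 : (0 < P)%nat.
Hypothesis x_P : x P mod m = x 0 mod m.
Hypothesis x_SP : x (S P) mod m = x 1 mod m.

Lemma in_L_mod_shift (n : nat) : x (n + P) mod m = x n mod m.
Proof.
  enough (H : x (n + P) mod m = x n mod m /\ x (S n + P) mod m = x (S n) mod m)
    by apply H.
  induction n as [|n [IHn IHSn]]; [easy|].
  split; [exact IHSn|].
  replace (S (S n) + P)%nat with (S (S (n + P))) by lia.
  apply in_L_mod_step; [exact IHn|exact IHSn].
Qed.

Lemma in_L_mod_periodic (n : nat) : x n mod m = x (n mod P) mod m.
Proof.
  rewrite (Nat.div_mod_eq n P) at 1.
  generalize (n mod P)%nat; induction (n / P)%nat as [|q IHq]; intro i.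
  - now rewrite Nat.mul_0_r.
  - replace (P * S q + i)%nat with ((P * q + i) + P)%nat by lia.
    now rewrite in_L_mod_shift.
Qed.

Lemma residue_set_periodic (r : Z) : residue_set x m r <-> In r (residues x m P).
Proof.
  unfold residue_set, residues; rewrite in_map_iff; split.
  - intros [n <-]; exists (n mod P)%nat.
    split; [symmetry; apply in_L_mod_periodic|rewrite in_seq].
    split; [lia|apply Nat.mod_upper_bound; lia].
  - now intros [i [<- _]]; exists i.
Qed.

Lemma rho_is_periodic : rho_is x m (length (nodup Z.eq_dec (residues x m P))).
Proof.
  exists (nodup Z.eq_dec (residues x m P)); split; [apply NoDup_nodup|split; [easy|]].
  intro r; now rewrite nodup_In, residue_set_periodic.
Qed.

Lemma mod_nonzero_periodic : ~ In 0 (residues x m P) -> forall j, x j mod m <> 0.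
Proof. intros H0 j Hj; apply H0, residue_set_periodic; now exists j. Qed.

End PeriodicModulo.

Fixpoint rec_pair (a u v : Z) (n : nat) : Z * Z :=
  match n with
  | O => (u, v)
  | S k => let p := rec_pair a u v k in (snd p, a * snd p + fst p)
  end.

Definition rec_seq (a u v : Z) (n : nat) : Z := fst (rec_pair a u v n).

Lemma rec_seq_in_L (a u v : Z) : in_L a (rec_seq a u v).
Proof. now intro n. Qed.

Lemma rho4_nonzero_of_eq2 :
  exists (x : nat -> Z) (m : Z),
    in_L 2 x /\ 1 <= m /\ rho_is x m 4 /\ (forall j, x j mod m <> 0).
Proof.
  exists (rec_seq 2 1 1), 5; split; [apply rec_seq_in_L|split; [lia|]].
  assert (Hres : residues (rec_seq 2 1 1) 5 12 = [1; 1; 3; 2; 2; 1; 4; 4; 2; 3; 3; 4])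
    by reflexivity.
  split.
  - replace 4%nat with (length (nodup Z.eq_dec (residues (rec_seq 2 1 1) 5 12%nat)))
      by now rewrite Hres.
    apply rho_is_periodic with (a := 2); [apply rec_seq_in_L|lia|lia|easy|easy].
  - apply mod_nonzero_periodic with (a := 2) (P := 12%nat);
      [apply rec_seq_in_L|lia|lia|easy|easy|].
    rewrite Hres; simpl; intuition discriminate.
Qed.

Lemma rho4_nonzero_of_neq2 (a : Z) :
  1 <= a -> a <> 2 ->
  exists (x : nat -> Z) (m : Z),
    in_L a x /\ 1 <= m /\ rho_is x m 4 /\ (forall j, x j mod m <> 0).
Proof.
  intros Ha1 Ha2; set (m := a * a + 4); set (x := rec_seq a a (-2)).
  assert (Hm : 0 < m) by (unfold m; nia).
  assert (x_mod : forall n k r, x n = k * m + r -> 0 <= r < m -> x n mod m = r).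
  { intros n k r Hn Hr; symmetry; apply Z.mod_unique with k; [now left|lia]. }
  assert (Hres : residues x m 4%nat = [a; m - 2; m - a; 2]).
  { unfold residues; simpl map.
    rewrite (x_mod 0%nat 0 a), (x_mod 1%nat (-1) (m - 2)), (x_mod 2%nat (-1) (m - a)),
      (x_mod 3%nat (-1) 2); try reflexivity; unfold x, rec_seq, m; cbn [rec_pair fst snd]; nia. }
  assert (Hnodup : NoDup [a; m - 2; m - a; 2]).
  { repeat constructor; simpl; unfold m in *; nia. }
  exists x, m; split; [apply rec_seq_in_L|split; [lia|]].
  assert (x_4 : x 4%nat mod m = x 0%nat mod m).
  { rewrite (x_mod 4%nat (- a) a), (x_mod 0%nat 0 a);
      try reflexivity; unfold x, rec_seq, m; cbn [rec_pair fst snd]; nia. }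
  assert (x_5 : x 5%nat mod m = x 1%nat mod m).
  { rewrite (x_mod 5%nat (- a * a - 1) (m - 2)), (x_mod 1%nat (-1) (m - 2));
      try reflexivity; unfold x, rec_seq, m; cbn [rec_pair fst snd]; nia. }
  split.
  - replace 4%nat with (length (nodup Z.eq_dec (residues x m 4%nat)))
      by now rewrite Hres, (nodup_fixed_point Z.eq_dec Hnodup).
    apply rho_is_periodic with (a := a); [apply rec_seq_in_L|lia|lia|easy|easy].
  - apply mod_nonzero_periodic with (a := a) (P := 4%nat);
      [apply rec_seq_in_L|lia|lia|easy|easy|].
    rewrite Hres; simpl; unfold m; nia.
Qed.

Theorem mainTheorem16 (a1 : Z) (ha1 : 1 <= a1) :
  (exists (x : nat -> Z) (m : Z),
      in_L a1 x /\ 1 <= m /\ rho_is x m 4 /\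
      (forall j : nat, x j mod m <> 0))
  /\ in_R a1 4.
Proof.
  assert (H : exists (x : nat -> Z) (m : Z),
      in_L a1 x /\ 1 <= m /\ rho_is x m 4 /\ (forall j, x j mod m <> 0)).
  { destruct (Z.eq_dec a1 2) as [-> | Ha2].
    - exact rho4_nonzero_of_eq2.
    - exact (rho4_nonzero_of_neq2 a1 ha1 Ha2). }
  split; [exact H|].
  destruct H as [x [m [Hx [Hm [Hrho _]]]]]; now exists x, m.
Qed.
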